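(* Let $H$ be an almost-breakable monoid. Then: (i) the irreducibles of $\mathcal{P}_{\mathrm{fin},1}(H)$ are precisely the $2$-element subsets of $H$ containing $1_H$; (ii) every element of $\mathcal{P}_{\mathrm{fin},1}(H)$ admits a square-free factorization into irreducibles, i.e. a factorization in which no irreducible occurs more than once as a letter.
   Context: A monoid $H$ is almost-breakable if for all $x,y\in H$, $xy\in\{x,y\}$ or $yx\in\{x,y\}$. $\mathcal{P}_{\mathrm{fin},1}(H)$ denotes the set of non-empty finite subsets of $H$ containing $1_H$, a monoid under $XY=\{xy:x\in X,y\in Y\}$ with identity $\{1_H\}$. In a monoid $M$: $x\mid_M y$ iff $y\in MxM$; $x,y$ are associated if each divides the other; proper divisor means divides but not associated. A unit-divisor divides $1_M$; otherwise it is a non-unit-divisor. An irreducible is a non-unit-divisor $a$ with $a\neq xy$ for all non-unit-divisors $x,y$ properly dividing $a$. A factorization of an element $X$ is a finite word (possibly empty, for the identity) over the irreducibles whose product is $X$. *)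

From Stdlib Require Import List FunctionalExtensionality PropExtensionality ProofIrrelevance.
Import ListNotations.
Set Implicit Arguments.

Record monoid := Monoid {
  carrier :> Type;
  mul : carrier -> carrier -> carrier;
  one : carrier;
  mulA : forall x y z, mul x (mul y z) = mul (mul x y) z;
  mul1m : forall x, mul one x = x;
  mulm1 : forall x, mul x one = x
}.
Arguments mul {m} x y.
Arguments one {m}.

Section Generic.
Variable M : monoid.

Definition mdivides (x y : M) : Prop := exists a b : M, y = mul (mul a x) b.
Definition massociated (x y : M) : Prop := mdivides x y /\ mdivides y x.
Definition mproper_divisor (x y : M) : Prop := mdivides x y /\ ~ massociated x y.
Definition unit_divisor (x : M) : Prop := mdivides x one.
Definition non_unit_divisor (x : M) : Prop := ~ unit_divisor x.
Definition irreducible (a : M) : Prop :=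
  non_unit_divisor a /\
  forall x y : M, non_unit_divisor x -> non_unit_divisor y ->
    mproper_divisor x a -> mproper_divisor y a -> a <> mul x y.
Definition mprod (w : list M) : M := fold_right (fun a b => mul a b) one w.
Definition factorization (w : list M) (X : M) : Prop :=
  Forall irreducible w /\ mprod w = X.
Definition squarefree_factorization (w : list M) (X : M) : Prop :=
  factorization w X /\ NoDup w.
End Generic.

Definition almost_breakable (H : monoid) : Prop :=
  forall x y : H, (mul x y = x \/ mul x y = y) \/ (mul y x = x \/ mul y x = y).

Section Pfin.
Variable H : monoid.

Definition finite_subset (X : H -> Prop) : Prop :=
  exists l : list H, forall x, X x -> In x l.

(** non-empty finite subsets containing 1_H (non-emptiness follows from 1 \in X) *)
Definition Pfin1 : Type := { X : H -> Prop | finite_subset X /\ X one }.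

Definition set_mul (X Y : H -> Prop) : H -> Prop :=
  fun z => exists x y, X x /\ Y y /\ z = mul x y.

Lemma set_mul_prop (X Y : Pfin1) :
  finite_subset (set_mul (proj1_sig X) (proj1_sig Y)) /\ set_mul (proj1_sig X) (proj1_sig Y) one.
Proof.
destruct X as [X [[lx HX] X1]], Y as [Y [[ly HY] Y1]]; simpl; split.
- exists (map (fun p => mul (fst p) (snd p)) (list_prod lx ly)).
  intros z [x [y [Hx [Hy ->]]]].
  apply (in_map (fun p => mul (fst p) (snd p)) _ (x, y)).
  apply in_prod; auto.
- exists one, one; repeat split; auto. now rewrite mulm1.
Qed.

Definition pmul (X Y : Pfin1) : Pfin1 :=
  exist _ (set_mul (proj1_sig X) (proj1_sig Y)) (set_mul_prop X Y).

Lemma pone_prop : finite_subset (fun z : H => z = one) /\ (fun z : H => z = one) one.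
Proof. split; [exists [one]; intros x ->; now left | reflexivity]. Qed.

Definition pone : Pfin1 := exist _ (fun z => z = one) pone_prop.

Lemma Pfin1_eq (X Y : Pfin1) : (forall z, proj1_sig X z <-> proj1_sig Y z) -> X = Y.
Proof.
destruct X as [X pX], Y as [Y pY]; simpl; intros E.
assert (X = Y) as ->.
{ apply functional_extensionality; intro z; apply propositional_extensionality; auto. }
f_equal; apply proof_irrelevance.
Qed.

Lemma pmulA (X Y Z : Pfin1) : pmul X (pmul Y Z) = pmul (pmul X Y) Z.
Proof.
apply Pfin1_eq; intro w; simpl; unfold set_mul; split.
- intros [x [t [Hx [[y [z [Hy [Hz ->]]]] ->]]]].
  exists (mul x y), z; repeat split; auto.
  + exists x, y; auto.
  + apply mulA.
- intros [t [z [[x [y [Hx [Hy ->]]]] [Hz ->]]]].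
  exists x, (mul y z); repeat split; auto.
  + exists y, z; auto.
  + symmetry; apply mulA.
Qed.

Lemma pmul1m (X : Pfin1) : pmul pone X = X.
Proof.
apply Pfin1_eq; intro w; simpl; unfold set_mul; split.
- intros [x [y [-> [Hy ->]]]]; now rewrite mul1m.
- intros Hw; exists one, w; repeat split; auto; now rewrite mul1m.
Qed.

Lemma pmulm1 (X : Pfin1) : pmul X pone = X.
Proof.
apply Pfin1_eq; intro w; simpl; unfold set_mul; split.
- intros [x [y [Hx [-> ->]]]]; now rewrite mulm1.
- intros Hw; exists w, one; repeat split; auto; now rewrite mulm1.
Qed.

Definition PfinMonoid : monoid := @Monoid Pfin1 pmul pone pmulA pmul1m pmulm1.
End Pfin.

(* In an almost-breakable monoid every element is idempotent and divisibility
   is total, so a finite X ∋ 1 with an element other than 1 has a greatest such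
   element a.  If some x ∈ X had x a ∉ {x, a} and some y ∈ X had a y ∉ {y, a},
   then x a and a y would contradict almost-breakability; hence
   X = (X \ {a}) {1, a} or X = {1, a} (X \ {a}).  When X has a second
   non-identity element both factors are proper non-unit divisors of X, so only
   the pairs {1, a} are irreducible, and peeling off greatest elements one at a
   time writes X as a product of pairwise distinct pairs. *)

From Stdlib Require Import List Classical ClassicalEpsilon Wf_nat Permutation.
Import ListNotations.

Section Divisibility.
Variable M : monoid.

Lemma mdivides_refl (x : M) : mdivides M x x.
Proof. exists one, one. now rewrite mul1m, mulm1. Qed.

Lemma mdivides_trans (x y z : M) : mdivides M x y -> mdivides M y z -> mdivides M x z.
Proof.
intros [a [b ->]] [c [d ->]]. exists (mul c a), (mul b d). now rewrite !mulA.
Qed.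

Lemma mdivides_mulr (x y : M) : mdivides M x (mul x y).
Proof. exists one, y. now rewrite mul1m. Qed.

Lemma mdivides_mull (x y : M) : mdivides M y (mul x y).
Proof. exists x, one. now rewrite mulm1. Qed.

Lemma mproper_divisor_mulr (x y : M) :
  ~ mdivides M (mul x y) x -> mproper_divisor M x (mul x y).
Proof. intros N. split; [apply mdivides_mulr | intros [_ D]; contradiction]. Qed.

Lemma mproper_divisor_mull (x y : M) :
  ~ mdivides M (mul x y) y -> mproper_divisor M y (mul x y).
Proof. intros N. split; [apply mdivides_mull | intros [_ D]; contradiction]. Qed.

Lemma irreducible_neq_mul (a x y : M) :
  irreducible M a -> non_unit_divisor M x -> non_unit_divisor M y ->
  ~ mdivides M a x -> ~ mdivides M a y -> a <> mul x y.
Proof.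
intros [_ Ha] nx ny ax ay E. apply (Ha x y nx ny); [| | exact E]; rewrite E.
- apply mproper_divisor_mulr. now rewrite <- E.
- apply mproper_divisor_mull. now rewrite <- E.
Qed.

Lemma mprod_app (w1 w2 : list M) : mprod M (w1 ++ w2) = mul (mprod M w1) (mprod M w2).
Proof.
induction w1 as [|x w1 IH]; simpl; [now rewrite mul1m | now rewrite IH, mulA].
Qed.

End Divisibility.

Section AlmostBreakable.
Context {H : monoid}.
Hypothesis hH : almost_breakable H.

Lemma mul_idem (x : H) : mul x x = x.
Proof. now destruct (hH x x) as [[E|E]|[E|E]]. Qed.

Lemma mdivides_total (x y : H) : mdivides H x y \/ mdivides H y x.
Proof.
destruct (hH x y) as [[E|E]|[E|E]]; rewrite <- E.
- right. apply mdivides_mull.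
- left. apply mdivides_mulr.
- right. apply mdivides_mulr.
- left. apply mdivides_mull.
Qed.

Lemma exists_greatest (P : H -> Prop) (l : list H) :
  (exists x, P x /\ In x l) ->
  exists a, P a /\ In a l /\ forall x, P x -> In x l -> mdivides H x a.
Proof.
induction l as [|b l IH]; [intros [x [_ []]] | intros Ex].
destruct (classic (exists x, P x /\ In x l)) as [Exl|Nxl].
- destruct (IH Exl) as [a [Pa [la Ga]]].
  destruct (classic (P b)) as [Pb|nPb]; [destruct (mdivides_total b a) as [ba|ab] |].
  + exists a. split; [|split; [now right|]]; auto.
    intros x Px [<-|lx]; auto.
  + exists b. split; [|split; [now left|]]; auto.
    intros x Px [<-|lx]; [apply mdivides_refl | apply mdivides_trans with a; auto].
  + exists a. split; [|split; [now right|]]; auto.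
    intros x Px [<-|lx]; [contradiction | auto].
- destruct Ex as [x [Px [->|lx]]]; [| exfalso; eauto].
  exists x. split; [|split; [now left|]]; auto.
  intros y Py [->|ly]; [apply mdivides_refl | exfalso; eauto].
Qed.

Lemma mul_divisor_absorb_l (x a : H) : mdivides H x a -> mul a x = x -> mul x a = a.
Proof.
intros [u [v Ea]] ax.
assert (uxa : mul u (mul x a) = a).
{ rewrite mulA, Ea at 1. now rewrite mulA, mul_idem, <- Ea. }
assert (axa : mul a (mul x a) = a).
{ rewrite <- uxa at 1. now rewrite <- mulA, mul_idem. }
transitivity (mul a (mul x a)); [now rewrite mulA, ax | exact axa].
Qed.

Lemma mul_divisor_absorb_r (x a : H) : mdivides H x a -> mul x a = x -> mul a x = a.
Proof.
intros [u [v Ea]] xa. rewrite <- mulA in Ea.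
assert (axv : mul (mul a x) v = a).
{ rewrite <- mulA, Ea at 1. now rewrite <- mulA, mul_idem, <- Ea. }
assert (axa : mul (mul a x) a = a).
{ rewrite <- axv at 2. now rewrite mulA, mul_idem. }
transitivity (mul (mul a x) a); [now rewrite <- mulA, xa | exact axa].
Qed.

Lemma mul_divisor_absorb (x a : H) : mdivides H x a -> mul x a = a \/ mul a x = a.
Proof.
intros D. destruct (hH x a) as [[E|E]|[E|E]].
- right. now apply mul_divisor_absorb_r.
- now left.
- left. now apply mul_divisor_absorb_l.
- now right.
Qed.

Lemma idempotent_sandwich (a p q : H) :
  mul a p = a -> mul p a = p -> mul a q = q -> mul q a = a -> p = a \/ q = a.
Proof.
intros ap pa aq qa. destruct (hH p q) as [[E|E]|[E|E]].
- right. now rewrite <- aq, <- ap at 1; rewrite <- mulA, E.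
- left. now rewrite <- pa, <- qa at 1; rewrite mulA, E.
- left. now rewrite <- E at 1; rewrite <- aq, <- mulA, E.
- right. now rewrite <- E at 1; rewrite <- pa, mulA, E.
Qed.

Lemma greatest_absorbs_one_side (P : H -> Prop) (a : H) :
  (forall x, P x -> mdivides H x a) ->
  (forall x, P x -> mul x a = x \/ mul x a = a) \/
  (forall x, P x -> mul a x = x \/ mul a x = a).
Proof.
intros G. apply NNPP. intros [NL NR]%not_or_and.
apply not_all_ex_not in NL as [x NL]; apply imply_to_and in NL as [Px [xa_x xa_a]%not_or_and].
apply not_all_ex_not in NR as [y NR]; apply imply_to_and in NR as [Py [ay_y ay_a]%not_or_and].
destruct (mul_divisor_absorb x a (G x Px)) as [E|ax]; [contradiction|].
destruct (mul_divisor_absorb y a (G y Py)) as [ya|E]; [|contradiction].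
destruct (idempotent_sandwich a (mul x a) (mul a y)) as [E|E]; try contradiction.
- now rewrite mulA, ax, mul_idem.
- now rewrite <- mulA, mul_idem.
- now rewrite mulA, mul_idem.
- now rewrite <- mulA, ya, mul_idem.
Qed.

End AlmostBreakable.

Section FiniteSubsets.
Context {H : monoid}.

Local Notation "z ∈ X" := (proj1_sig (X : Pfin1 H) z) (at level 70, no associativity).

Lemma one_mem (X : Pfin1 H) : one ∈ X.
Proof. exact (proj2 (proj2_sig X)). Qed.

Lemma ppair_spec (a : H) :
  finite_subset H (fun z => z = one \/ z = a) /\ (@one H = one \/ @one H = a).
Proof. split; [exists [one; a]; intros z [-> | ->]; simpl; auto | now left]. Qed.

Definition ppair (a : H) : Pfin1 H := exist _ _ (ppair_spec a).

Lemma premove_spec (X : Pfin1 H) (a : H) :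
  finite_subset H (fun z => z ∈ X /\ (z = one \/ z <> a)) /\
  (one ∈ X /\ (@one H = one \/ @one H <> a)).
Proof.
destruct (proj1 (proj2_sig X)) as [l Hl].
split; [exists l; intros z [Xz _]; auto | split; [apply one_mem | now left]].
Qed.

(* X \ {a}, except that 1 is always kept. *)
Definition premove (X : Pfin1 H) (a : H) : Pfin1 H := exist _ _ (premove_spec X a).

Lemma mdivides_Pfin1_subset {X Y : Pfin1 H} :
  mdivides (PfinMonoid H) Y X -> forall z, z ∈ Y -> z ∈ X.
Proof.
intros [A [B ->]] z Yz. exists (mul one z), one. split; [|split; [apply one_mem|]].
- exists one, z. repeat split; auto using one_mem.
- now rewrite mulm1, mul1m.
Qed.

Lemma non_unit_divisor_Pfin1 (Y : Pfin1 H) :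
  non_unit_divisor (PfinMonoid H) Y <-> exists z, z ∈ Y /\ z <> one.
Proof.
split.
- intros N. apply NNPP. intros N'. apply N.
  replace Y with (one : PfinMonoid H); [apply mdivides_refl|].
  apply Pfin1_eq. intros z. split; [intros ->; apply one_mem|].
  intros Yz. apply NNPP. eauto.
- intros [z [Yz nz]] D. exact (nz (mdivides_Pfin1_subset D z Yz)).
Qed.

Lemma ppair_inj (a b : H) : a <> one -> ppair a = ppair b -> a = b.
Proof.
intros na E. assert (ab : a ∈ ppair b) by (rewrite <- E; now right).
now destruct ab.
Qed.

Lemma ppair_irreducible (a : H) : a <> one -> irreducible (PfinMonoid H) (ppair a).
Proof.
intros na. split; [apply non_unit_divisor_Pfin1; exists a; split; [now right | exact na]|].
intros Y Z nY _ [YX nXY] _ _. apply nXY. split; [exact YX|].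
replace Y with (ppair a); [apply mdivides_refl|].
apply non_unit_divisor_Pfin1 in nY as [y [Yy ny]].
assert (ya : y = a) by now destruct (mdivides_Pfin1_subset YX y Yy).
apply Pfin1_eq. intros z. split; [intros [-> | ->]; [apply one_mem | now subst]|].
exact (mdivides_Pfin1_subset YX z).
Qed.

Lemma pmul_premove_ppair (X : Pfin1 H) (a : H) : a ∈ X ->
  (forall x, x ∈ X -> x <> one -> mul x a = x \/ mul x a = a) ->
  X = pmul (premove X a) (ppair a).
Proof.
intros Xa L. apply Pfin1_eq. intros z. simpl. unfold set_mul. split.
- intros Xz. destruct (classic (z = a)) as [->|nza].
  + exists one, a. repeat split; auto using one_mem. now rewrite mul1m.
  + exists z, one. repeat split; auto. now rewrite mulm1.
- intros [x [y [[Xx _] [[-> | ->] ->]]]]; [now rewrite mulm1|].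
  destruct (classic (x = one)) as [->|nx]; [now rewrite mul1m|].
  now destruct (L x Xx nx) as [-> | ->].
Qed.

Lemma pmul_ppair_premove (X : Pfin1 H) (a : H) : a ∈ X ->
  (forall x, x ∈ X -> x <> one -> mul a x = x \/ mul a x = a) ->
  X = pmul (ppair a) (premove X a).
Proof.
intros Xa R. apply Pfin1_eq. intros z. simpl. unfold set_mul. split.
- intros Xz. destruct (classic (z = a)) as [->|nza].
  + exists a, one. repeat split; auto using one_mem. now rewrite mulm1.
  + exists one, z. repeat split; auto. now rewrite mul1m.
- intros [y [x [[-> | ->] [[Xx _] ->]]]]; [now rewrite mul1m|].
  destruct (classic (x = one)) as [->|nx]; [now rewrite mulm1|].
  now destruct (R x Xx nx) as [-> | ->].
Qed.

Hypothesis hH : almost_breakable H.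

Lemma exists_greatest_nonunit (X : Pfin1 H) : (exists z, z ∈ X /\ z <> one) ->
  exists a, a ∈ X /\ a <> one /\ forall x, x ∈ X -> x <> one -> mdivides H x a.
Proof.
intros [z [Xz nz]]. destruct (proj1 (proj2_sig X)) as [l Hl].
destruct (exists_greatest hH (fun x => x ∈ X /\ x <> one) l) as [a [[Xa na] [_ Ga]]].
- exists z. auto.
- exists a. auto.
Qed.

Lemma Pfin1_split_greatest (X : Pfin1 H) (a : H) : a ∈ X ->
  (forall x, x ∈ X -> x <> one -> mdivides H x a) ->
  X = pmul (premove X a) (ppair a) \/ X = pmul (ppair a) (premove X a).
Proof.
intros Xa Ga.
destruct (greatest_absorbs_one_side hH (fun x => x ∈ X /\ x <> one) a) as [L|R].
- intros x [Xx nx]. auto.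
- left. apply pmul_premove_ppair; auto.
- right. apply pmul_ppair_premove; auto.
Qed.

Lemma irreducible_Pfin1_pair (X : Pfin1 H) : irreducible (PfinMonoid H) X ->
  exists a, a <> one /\ forall z, z ∈ X <-> z = one \/ z = a.
Proof.
intros Xirr. pose proof (proj1 Xirr) as Ex. apply non_unit_divisor_Pfin1 in Ex.
destruct (exists_greatest_nonunit X Ex) as [a [Xa [na Ga]]].
exists a. split; [exact na|]. intros z. split; [|intros [-> | ->]; auto using one_mem].
intros Xz. apply NNPP. intros [nz nza]%not_or_and.
assert (nY : non_unit_divisor (PfinMonoid H) (premove X a)).
{ apply non_unit_divisor_Pfin1. exists z. simpl. auto. }
assert (nZ : non_unit_divisor (PfinMonoid H) (ppair a)).
{ apply non_unit_divisor_Pfin1. exists a. simpl. auto. }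
assert (XY : ~ mdivides (PfinMonoid H) X (premove X a)).
{ intros D. now destruct (mdivides_Pfin1_subset D a Xa) as [_ [E|E]]. }
assert (XZ : ~ mdivides (PfinMonoid H) X (ppair a)).
{ intros D. now destruct (mdivides_Pfin1_subset D z Xz). }
destruct (Pfin1_split_greatest X a Xa Ga) as [E|E].
- exact (irreducible_neq_mul (PfinMonoid H) X _ _ Xirr nY nZ XY XZ E).
- exact (irreducible_neq_mul (PfinMonoid H) X _ _ Xirr nZ nY XZ XY E).
Qed.

Let eq_dec (x y : H) : {x = y} + {x <> y} := excluded_middle_informative (x = y).

Lemma squarefree_pair_factorization (l : list H) (X : Pfin1 H) :
  (forall z, z ∈ X -> z <> one -> In z l) ->
  exists w : list (PfinMonoid H), mprod (PfinMonoid H) w = X /\ NoDup w /\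
    Forall (fun Y => exists b, b ∈ X /\ b <> one /\ Y = ppair b) w.
Proof.
revert X. induction l as [l IH] using (induction_ltof1 _ (@length H)). intros X Xl.
destruct (classic (exists z, z ∈ X /\ z <> one)) as [Ex|Nx].
2:{ exists []. split; [|split; constructor].
    apply Pfin1_eq. intros z. split; [intros ->; apply one_mem|].
    intros Xz. apply NNPP. eauto. }
destruct (exists_greatest_nonunit X Ex) as [a [Xa [na Ga]]].
destruct (IH (remove eq_dec a l) (remove_length_lt eq_dec l a (Xl a Xa na)) (premove X a))
  as [w [Ew [Nw Fw]]].
{ intros z [Xz [z1|za]] nz; [contradiction|]. apply in_in_remove; auto. }
assert (Nin : ~ In (ppair a) w).
{ intros Iw. rewrite Forall_forall in Fw.
  destruct (Fw _ Iw) as [b [[_ [b1|ba]] [nb E]]]; [contradiction|].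
  exact (ba (eq_sym (ppair_inj a b na E))). }
assert (Fw' : Forall (fun Y => exists b, b ∈ X /\ b <> one /\ Y = ppair b) w).
{ refine (Forall_impl _ _ Fw). intros Y [b [[Xb _] Eb]]. eauto. }
destruct (Pfin1_split_greatest X a Xa Ga) as [E|E].
- exists (w ++ [ppair a]). split; [|split].
  + rewrite mprod_app, E, <- Ew. simpl. now rewrite pmulm1.
  + apply Permutation_NoDup with (ppair a :: w); [apply Permutation_cons_append|].
    now constructor.
  + apply Forall_app. split; [exact Fw'|]. constructor; [eauto | constructor].
- exists (ppair a :: w). split; [|split].
  + simpl. now rewrite E, <- Ew.
  + now constructor.
  + constructor; [eauto | exact Fw'].
Qed.

End FiniteSubsets.

Theorem proposition4p2 (H : monoid) (hH : almost_breakable H) :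
  (forall X : PfinMonoid H,
     irreducible (PfinMonoid H) X <->
     exists a : H, a <> one /\ forall z : H, proj1_sig (X : Pfin1 H) z <-> (z = one \/ z = a))
  /\
  (forall X : PfinMonoid H,
     exists w : list (PfinMonoid H), squarefree_factorization (PfinMonoid H) w X).
Proof.
split.
- intros X. split; [apply irreducible_Pfin1_pair, hH|].
  intros [a [na HX]].
  replace X with (ppair a) by (apply Pfin1_eq; intros z; now rewrite HX).
  now apply ppair_irreducible.
- intros X. destruct (proj1 (proj2_sig X)) as [l Hl].
  destruct (squarefree_pair_factorization hH l X) as [w [Ew [Nw Fw]]]; [auto|].
  exists w. repeat split; [|exact Ew|exact Nw].
  refine (Forall_impl _ _ Fw). intros Y [b [_ [nb ->]]]. now apply ppair_irreducible.
Qed.
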